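(* Let $\mathcal{H}$ be a Hilbert space, $\mathcal{H}_1$ a closed subspace with $\{0\}\ne\mathcal{H}_1\ne\mathcal{H}$, $P:\mathcal{H}\to\mathcal{H}_1$ the orthogonal projection onto $\mathcal{H}_1$, $Q:\mathcal{H}\to\mathcal{H}_1^\perp$ the orthogonal projection onto $\mathcal{H}_1^\perp$, $H\ge0$ a bounded selfadjoint operator on $\mathcal{H}$, $H_t:=H+tQ^*Q$, $\lambda_t:=\min\sigma(H_t)$ and $\lambda_\infty:=\min\sigma(PHP^* )$ (with $PHP^*$ regarded as an operator on $\mathcal{H}_1$). Then $\lambda_\infty\ge\lambda_t$ for all $t\ge0$, and for $t\ge2\|H+1\|^2$, $$\lambda_t\ge\lambda_\infty-\frac{4\|H+1\|^2(\lambda_\infty+1)^2}{t+1}\ge\lambda_\infty-\frac{4\|H+1\|^4}{t+1}.$$ *)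

From mathcomp Require Import all_boot all_order all_algebra.
From mathcomp Require Import complex.
From mathcomp Require Import classical_sets reals.
Set Implicit Arguments. Unset Strict Implicit. Unset Printing Implicit Defensive.
Import Order.TTheory GRing.Theory Num.Theory.
Local Open Scope ring_scope.
Local Open Scope complex_scope.

Section Hilbert.
Variables (R : realType) (V : lmodType R[i]) (ip : V -> V -> R[i]).

Definition hnorm (x : V) : R := Num.sqrt (complex.Re (ip x x)).

Definition is_hilbert : Prop :=
  [/\ forall (a : R[i]) (x y z : V), ip (a *: x + y) z = a * ip x z + ip y z,
      forall x y : V, ip y x = (ip x y)^*,
      forall x : V, 0 <= ip x x,
      forall x : V, ip x x = 0 -> x = 0 &
      forall u : nat -> V,
        (forall e : R, 0 < e -> exists N : nat, forall m n : nat,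
            (N <= m)%N -> (N <= n)%N -> hnorm (u m - u n) < e) ->
        exists l : V, forall e : R, 0 < e -> exists N : nat, forall n : nat,
            (N <= n)%N -> hnorm (u n - l) < e].

Definition closed_subspace (S : V -> Prop) : Prop :=
  [/\ S 0,
      forall (a : R[i]) (x y : V), S x -> S y -> S (a *: x + y) &
      forall (u : nat -> V) (l : V), (forall n, S (u n)) ->
        (forall e : R, 0 < e -> exists N : nat, forall n : nat,
            (N <= n)%N -> hnorm (u n - l) < e) -> S l].

Definition is_orth_proj (S : V -> Prop) (P : V -> V) : Prop :=
  forall x : V, S (P x) /\ (forall y : V, S y -> ip (x - P x) y = 0).

Definition linear_op (A : V -> V) : Prop :=
  forall (a : R[i]) (x y : V), A (a *: x + y) = a *: A x + A y.

Definition bounded_on (S : V -> Prop) (A : V -> V) : Prop :=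
  exists M : R, forall x : V, S x -> hnorm (A x) <= M * hnorm x.

Definition selfadjoint (A : V -> V) : Prop :=
  forall x y : V, ip (A x) y = ip x (A y).

Definition nonneg_op (A : V -> V) : Prop := forall x : V, 0 <= ip (A x) x.

Definition opnorm (A : V -> V) : R :=
  inf [set M : R | 0 <= M /\ forall x : V, hnorm (A x) <= M * hnorm x].

(* spectrum of A, regarded as an operator on the (closed) subspace S
   (A is assumed to map S into S): z is NOT in the spectrum iff A - z
   has a bounded two-sided inverse on S. *)
Definition spectrum_on (S : V -> Prop) (A : V -> V) (z : R[i]) : Prop :=
  ~ (exists B : V -> V,
       [/\ forall x, S x -> S (B x),
           linear_op B,
           bounded_on S B,
           forall x, S x -> B (A x - z *: x) = x &
           forall x, S x -> A (B x) - z *: B x = x]).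

Definition is_spec_min (S : V -> Prop) (A : V -> V) (l : R) : Prop :=
  spectrum_on S A l%:C /\ forall z, spectrum_on S A z -> l%:C <= z.

End Hilbert.

From mathcomp Require Import all_boot all_order all_algebra.
From mathcomp Require Import complex.
From mathcomp Require Import classical_sets boolp reals topology normedtype sequences.
From mathcomp Require Import ring lra.
Import Order.TTheory GRing.Theory Num.Theory.
Local Open Scope ring_scope.
Local Open Scope complex_scope.
Set Implicit Arguments. Unset Strict Implicit.

(* Everything reduces to quadratic forms.  For a bounded selfadjoint A on a
   closed subspace, min sigma(A) is the infimum m of <A x, x> over unit
   vectors x: for z < m the operator A - z is coercive, hence invertible
   (Lax-Milgram, via a contraction argument that uses completeness), while
   near-minimisers of the form show that A - m has no bounded inverse.
   Testing H_t on H_1, where the penalty vanishes, gives lam_t <= lam_inf.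
   Conversely, for x = u + v with u = P x and v orthogonal to H_1,
   <H u, v> = <(H + 1) u, v> and <H v, v> >= 0, so
     <H_t x, x> >= lam_inf |u|^2 - 2 |H + 1| |u| |v| + t |v|^2,
   and completing the square bounds this below by (lam_inf - d) |x|^2, with
   d = 4 |H + 1|^2 (lam_inf + 1)^2 / (t + 1), as soon as t >= 2 |H + 1|^2.
   The last inequality is lam_inf + 1 <= |H + 1|, tested on a unit vector
   of H_1. *)

Lemma expr_eventually_lt (R : realType) (q e : R) : 0 <= q -> q < 1 -> 0 < e ->
  exists N : nat, forall n, (N <= n)%N -> q ^+ n < e.
Proof.
move=> q0 q1 e0; have q1n : `|q| < 1 by rewrite ger0_norm.
by have /cvgr_lt /(_ e e0) [N _ hN] := cvg_expr q1n; exists N.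
Qed.

Lemma penalty_discriminant_ineq (R : realFieldType) (L t : R) :
  1 <= L -> 2 * L ^+ 2 <= t -> t + 1 <= 4 * L ^+ 2 * (t + 1 - L).
Proof.
move=> L1 Lt.
have L2 : 1 <= L ^+ 2 by rewrite expr_ge1 // (le_trans ler01).
have p1 : 0 <= (4 * L ^+ 2 - 1) * (t - 2 * L ^+ 2) by apply: mulr_ge0; lra.
have p2 : 0 <= L ^+ 3 * (2 * L - 1).
  by apply: mulr_ge0; [rewrite exprn_ge0 //; lra | lra].
have -> : 4 * L ^+ 2 * (t + 1 - L) = (4 * L ^+ 2 - 1) * (t - 2 * L ^+ 2)
    + 4 * (L ^+ 3 * (2 * L - 1)) + 2 * L ^+ 2 + t by ring.
lra.
Qed.

Lemma penalty_quadratic_lb (R : realFieldType) (l n t a b : R) :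
  0 <= l -> l + 1 <= n -> 2 * n ^+ 2 <= t ->
  (l - 4 * n ^+ 2 * (l + 1) ^+ 2 / (t + 1)) * (a ^+ 2 + b ^+ 2)
    <= l * a ^+ 2 - 2 * n * a * b + t * b ^+ 2.
Proof.
move=> l0 Ln tn; set L := l + 1; set d := 4 * n ^+ 2 * L ^+ 2 / (t + 1).
have L1 : 1 <= L by rewrite lerDr.
have n0 : 0 < n by rewrite (lt_le_trans ltr01) // (le_trans L1).
have t1 : 0 < t + 1 by have := sqr_ge0 n; lra.
have d0 : 0 < d by rewrite /d !(divr_gt0, mulr_gt0, exprn_gt0) // (lt_le_trans ltr01).
(* d a^2 - 2 n a b + (t - l + d) b^2 >= 0, as its discriminant is <= 0 *)
have disc : n ^+ 2 <= d * (t - l + d).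
  have Lt : 2 * L ^+ 2 <= t.
    by apply: le_trans tn; rewrite ler_pM2l // ler_sqr // nnegrE ltW // (lt_le_trans ltr01).
  have e : d * (t + 1 - L) * (t + 1) = n ^+ 2 * (4 * L ^+ 2 * (t + 1 - L)).
    by rewrite /d; field; rewrite gt_eqF.
  have h : n ^+ 2 <= d * (t + 1 - L).
    rewrite -(ler_pM2r t1) e; apply: (ler_wpM2l (sqr_ge0 n)).
    exact: penalty_discriminant_ineq.
  by apply: le_trans h _; apply: (ler_wpM2l (ltW d0)); rewrite /L; lra.
have : 0 <= d * a ^+ 2 - 2 * n * a * b + (t - l + d) * b ^+ 2.
  rewrite -(pmulr_rge0 _ d0).
  have -> : d * (d * a ^+ 2 - 2 * n * a * b + (t - l + d) * b ^+ 2)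
      = (d * a - n * b) ^+ 2 + (d * (t - l + d) - n ^+ 2) * b ^+ 2 by ring.
  by rewrite addr_ge0 ?sqr_ge0 // mulr_ge0 ?sqr_ge0 // subr_ge0.
lra.
Qed.

Lemma penalty_bound_le (R : realFieldType) (l n t : R) :
  0 <= l -> l + 1 <= n -> 0 <= t ->
  l - 4 * n ^+ 4 / (t + 1) <= l - 4 * n ^+ 2 * (l + 1) ^+ 2 / (t + 1).
Proof.
move=> l0 Ln t0; rewrite lerD2l lerN2; apply: ler_wpM2r; first by rewrite invr_ge0; lra.
have hL : (l + 1) ^+ 2 <= n ^+ 2 by rewrite ler_sqr ?nnegrE //; lra.
rewrite (_ : n ^+ 4 = n ^+ 2 * n ^+ 2) -?exprD //; have := sqr_ge0 n; nra.
Qed.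

Section HilbertSpace.
Variables (R : realType) (V : lmodType R[i]) (ip : V -> V -> R[i]).

Local Notation nrm := (hnorm ip).

Definition re_ip (x y : V) : R := complex.Re (ip x y).

Local Notation "⟨ x , y ⟩" := (re_ip x y) (format "⟨ x ,  y ⟩").

Definition hcvg (u : nat -> V) (l : V) : Prop :=
  forall e : R, 0 < e -> exists N : nat, forall n : nat, (N <= n)%N -> nrm (u n - l) < e.

Section LinearOp.
Variable f : V -> V.
Hypothesis flin : linear_op f.

Lemma linear_op0 : f 0 = 0.
Proof.
have := flin 1 0 0; rewrite scale1r addr0 scale1r => /esym /(canRL (addrK _)).
by rewrite subrr.
Qed.

Lemma linear_opD x y : f (x + y) = f x + f y.
Proof. by rewrite -{1}[x]scale1r flin scale1r. Qed.

Lemma linear_opZ a x : f (a *: x) = a *: f x.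
Proof. by rewrite -[a *: x]addr0 flin linear_op0 addr0. Qed.

Lemma linear_opB x y : f (x - y) = f x - f y.
Proof. by rewrite linear_opD -scaleN1r linear_opZ scaleN1r. Qed.

End LinearOp.

Section Subspace.
Variable S : V -> Prop.
Hypothesis hS : closed_subspace ip S.

Lemma subspace0 : S 0.
Proof. by case: hS. Qed.

Lemma subspaceZD a x y : S x -> S y -> S (a *: x + y).
Proof. by case: hS => _ hZD _; apply: hZD. Qed.

Lemma subspaceZ a x : S x -> S (a *: x).
Proof. by move=> Sx; rewrite -[_ *: x]addr0; apply: subspaceZD => //; apply: subspace0. Qed.

Lemma subspaceD x y : S x -> S y -> S (x + y).
Proof. by move=> Sx Sy; rewrite -[x]scale1r; apply: subspaceZD. Qed.

Lemma subspaceB x y : S x -> S y -> S (x - y).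
Proof. by move=> Sx Sy; rewrite -scaleN1r; apply: subspaceD; last apply: subspaceZ. Qed.

Lemma subspace_hcvg u l : (forall n, S (u n)) -> hcvg u l -> S l.
Proof. by case: hS => _ _ hcl; apply: hcl. Qed.

End Subspace.

Lemma closed_subspaceT : closed_subspace ip (fun _ => True).
Proof. by []. Qed.

Section Hilbert.
Hypothesis hilbV : is_hilbert ip.

Lemma ipDl x y z : ip (x + y) z = ip x z + ip y z.
Proof. by case: hilbV => hlin _ _ _ _; rewrite -{1}[x]scale1r hlin mul1r. Qed.

Lemma ipZl a x z : ip (a *: x) z = a * ip x z.
Proof.
have ip0 : ip 0 z = 0.
  by have := ipDl 0 0 z; rewrite addr0 => /esym /(canRL (addrK _)); rewrite subrr.
by case: hilbV => hlin _ _ _ _; rewrite -[a *: x]addr0 hlin ip0 addr0.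
Qed.

Lemma ipBl x y z : ip (x - y) z = ip x z - ip y z.
Proof. by rewrite ipDl -scaleN1r ipZl mulN1r. Qed.

Lemma ip_eq0 x : ip x x = 0 -> x = 0.
Proof. by case: hilbV => _ _ _ hdef _; apply: hdef. Qed.

Lemma re_ipDl x y z : ⟨x + y, z⟩ = ⟨x, z⟩ + ⟨y, z⟩.
Proof. by rewrite /re_ip ipDl; case: (ip x z) (ip y z) => [? ?] [? ?]. Qed.

Lemma re_ipBl x y z : ⟨x - y, z⟩ = ⟨x, z⟩ - ⟨y, z⟩.
Proof. by rewrite /re_ip ipBl; case: (ip x z) (ip y z) => [? ?] [? ?]. Qed.

Lemma re_ipZl (r : R) x z : ⟨r%:C *: x, z⟩ = r * ⟨x, z⟩.
Proof. by rewrite /re_ip ipZl; case: (ip x z) => a b /=; rewrite mul0r subr0. Qed.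

Lemma re_ip0l z : ⟨0, z⟩ = 0.
Proof. by rewrite -(subrr z) re_ipBl subrr. Qed.

Lemma re_ipNl x z : ⟨- x, z⟩ = - ⟨x, z⟩.
Proof. by rewrite -sub0r re_ipBl re_ip0l sub0r. Qed.

Lemma re_ipC x y : ⟨x, y⟩ = ⟨y, x⟩.
Proof. by case: hilbV => _ hconj _ _ _; rewrite /re_ip hconj; case: ip. Qed.

Lemma re_ipDr x y z : ⟨z, x + y⟩ = ⟨z, x⟩ + ⟨z, y⟩.
Proof. by rewrite re_ipC re_ipDl !(re_ipC z). Qed.

Lemma re_ipBr x y z : ⟨z, x - y⟩ = ⟨z, x⟩ - ⟨z, y⟩.
Proof. by rewrite re_ipC re_ipBl !(re_ipC z). Qed.

Lemma re_ipZr (r : R) x z : ⟨z, r%:C *: x⟩ = r * ⟨z, x⟩.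
Proof. by rewrite re_ipC re_ipZl re_ipC. Qed.

Lemma re_ip0r z : ⟨z, 0⟩ = 0.
Proof. by rewrite re_ipC re_ip0l. Qed.

Lemma re_ipNr x z : ⟨z, - x⟩ = - ⟨z, x⟩.
Proof. by rewrite re_ipC re_ipNl re_ipC. Qed.

Lemma re_ip_ge0 x : 0 <= ⟨x, x⟩.
Proof. by case: hilbV => _ _ hpos _ _; have := hpos x; rewrite lecE => /andP[]. Qed.

Lemma re_ip_eq0 x : ⟨x, x⟩ = 0 -> x = 0.
Proof.
case: hilbV => _ _ hpos _ _ h; apply: ip_eq0; have := ger0_Im (hpos x).
by move: h; rewrite /re_ip; case: (ip x x) => a b /= -> ->.
Qed.

Lemma re_ip_sqrD x y : ⟨x + y, x + y⟩ = ⟨x, x⟩ + 2 * ⟨x, y⟩ + ⟨y, y⟩.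
Proof. by rewrite !re_ipDl !re_ipDr (re_ipC y x); ring. Qed.

Lemma re_ip_sqrB x y : ⟨x - y, x - y⟩ = ⟨x, x⟩ - 2 * ⟨x, y⟩ + ⟨y, y⟩.
Proof. by rewrite !re_ipBl !re_ipBr (re_ipC y x); ring. Qed.

Lemma re_ip_sqrZ (r : R) x : ⟨r%:C *: x, r%:C *: x⟩ = r ^+ 2 * ⟨x, x⟩.
Proof. by rewrite re_ipZl re_ipZr mulrA -expr2. Qed.

Lemma hnorm_sqr x : nrm x ^+ 2 = ⟨x, x⟩.
Proof. by rewrite /hnorm sqr_sqrtr // re_ip_ge0. Qed.

Lemma hnorm_ge0 x : 0 <= nrm x.
Proof. exact: sqrtr_ge0. Qed.

Lemma hnorm_eq0 x : nrm x = 0 -> x = 0.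
Proof. by move=> h; apply: re_ip_eq0; rewrite -hnorm_sqr h expr0n. Qed.

Lemma hnorm0 : nrm 0 = 0.
Proof. by rewrite /hnorm -/(re_ip 0 0) re_ip0l sqrtr0. Qed.

Lemma hnorm_gt0 x : x != 0 -> 0 < nrm x.
Proof. by move=> x0; rewrite lt0r hnorm_ge0 andbT; apply: contra_neq x0; apply: hnorm_eq0. Qed.

Lemma re_ip_gt0 x : x != 0 -> 0 < ⟨x, x⟩.
Proof. by move=> x0; rewrite -hnorm_sqr exprn_gt0 // hnorm_gt0. Qed.

Lemma hnormZ (r : R) x : nrm (r%:C *: x) = `|r| * nrm x.
Proof. by rewrite /hnorm -!/(re_ip _ _) re_ip_sqrZ sqrtrM ?sqr_ge0 // sqrtr_sqr. Qed.

Lemma hnorm_opp x : nrm (- x) = nrm x.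
Proof. by rewrite /hnorm -!/(re_ip _ _) re_ipNl re_ipNr opprK. Qed.

Lemma hnormB_sym x y : nrm (x - y) = nrm (y - x).
Proof. by rewrite -hnorm_opp opprB. Qed.

Lemma hnorm_le_sqr x a : 0 <= a -> ⟨x, x⟩ <= a ^+ 2 -> nrm x <= a.
Proof. by move=> a0 h; rewrite -ler_sqr ?nnegrE ?hnorm_ge0 // hnorm_sqr. Qed.

Lemma re_ip_CauchySchwarz x y : ⟨x, y⟩ ^+ 2 <= ⟨x, x⟩ * ⟨y, y⟩.
Proof.
have [y0|ny0] := eqVneq ⟨y, y⟩ 0.
  by rewrite (re_ip_eq0 y0) re_ip0r expr0n re_ip0r mulr0.
have gy : 0 < ⟨y, y⟩ by rewrite lt0r ny0 re_ip_ge0.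
pose r := ⟨x, y⟩ / ⟨y, y⟩.
have := re_ip_ge0 (x - r%:C *: y); rewrite re_ip_sqrB re_ipZr re_ip_sqrZ => h.
have -> : ⟨x, y⟩ ^+ 2 = ⟨x, x⟩ * ⟨y, y⟩
    - ⟨y, y⟩ * (⟨x, x⟩ - 2 * (r * ⟨x, y⟩) + r ^+ 2 * ⟨y, y⟩).
  by rewrite /r; field; rewrite gt_eqF.
by rewrite gerBl mulr_ge0 // ltW.
Qed.

Lemma re_ip_norm_le x y : `|⟨x, y⟩| <= nrm x * nrm y.
Proof.
rewrite -ler_sqr ?nnegrE ?mulr_ge0 ?hnorm_ge0 // real_normK ?num_real //.
by rewrite exprMn !hnorm_sqr re_ip_CauchySchwarz.
Qed.

Lemma re_ip_le x y : ⟨x, y⟩ <= nrm x * nrm y.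
Proof. exact: le_trans (ler_norm _) (re_ip_norm_le x y). Qed.

Lemma re_ip_ge x y : - (nrm x * nrm y) <= ⟨x, y⟩.
Proof. by rewrite lerNl -re_ipNl -hnorm_opp re_ip_le. Qed.

Lemma ler_hnormD x y : nrm (x + y) <= nrm x + nrm y.
Proof.
apply: hnorm_le_sqr; first by rewrite addr_ge0 ?hnorm_ge0.
by rewrite re_ip_sqrD -!hnorm_sqr sqrrD -mulr_natl; have := re_ip_le x y; lra.
Qed.

Lemma ler_hnormB x y : nrm (x - y) <= nrm x + nrm y.
Proof. by rewrite -(hnorm_opp y); apply: ler_hnormD. Qed.

Lemma hcvg_unique u a b : hcvg u a -> hcvg u b -> a = b.
Proof.
move=> ua ub; apply/eqP; rewrite -subr_eq0; apply/eqP/hnorm_eq0.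
apply/le_anti; rewrite hnorm_ge0 andbT; apply/ler_addgt0Pr => e e0.
have e2 : 0 < e / 2 by rewrite divr_gt0.
have [N1 hN1] := ua _ e2; have [N2 hN2] := ub _ e2.
have -> : a - b = (u (maxn N1 N2) - b) - (u (maxn N1 N2) - a).
  by rewrite opprB [RHS]addrC addrA subrK.
rewrite add0r; apply: le_trans (ler_hnormB _ _) _.
have := hN1 _ (leq_maxl N1 N2); have := hN2 _ (leq_maxr N1 N2); lra.
Qed.

Lemma hcvg_shift u l : hcvg u l -> hcvg (fun n => u n.+1) l.
Proof. by move=> ul e /ul [N hN]; exists N => n Nn; apply/hN/ltnW. Qed.

Lemma hcvg_lipschitz (G : V -> V) (K : R) u l :
  (forall n, nrm (G (u n) - G l) <= K * nrm (u n - l)) ->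
  hcvg u l -> hcvg (fun n => G (u n)) (G l).
Proof.
move=> GK ul e e0.
have K1 : 0 < `|K| + 1 by rewrite ltr_wpDl.
have [N hN] := ul _ (divr_gt0 e0 K1).
exists N => n /hN; rewrite ltr_pdivlMr // mulrC => hn.
apply: le_lt_trans (GK n) _; apply: le_lt_trans hn.
by rewrite ler_wpM2r ?hnorm_ge0 //; have := ler_norm K; lra.
Qed.

Lemma hnorm_geometric_tail u (q C : R) : 0 <= q -> q < 1 ->
  (forall n, nrm (u n.+1 - u n) <= C * q ^+ n) ->
  forall n m, (n <= m)%N -> nrm (u m - u n) <= C / (1 - q) * q ^+ n.
Proof.
move=> q0 q1 du n m /subnKC <-.
have q1' : 0 < 1 - q by rewrite subr_gt0.
have C0 : 0 <= C by have := du 0%N; rewrite expr0 mulr1; apply: le_trans; apply: hnorm_ge0.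
suff tail j : nrm (u (n + j)%N - u n) <= C * (q ^+ n - q ^+ (n + j)) / (1 - q).
  apply: le_trans (tail _) _; rewrite mulrAC; apply: ler_wpM2l.
    exact: divr_ge0 C0 (ltW q1').
  by rewrite gerBl exprn_ge0.
elim: j => [|j IH]; first by rewrite addn0 !subrr hnorm0 mulr0 mul0r.
rewrite -(subrK (u (n + j)%N) (u _)) -addrA addnS.
apply: le_trans (ler_hnormD _ _) _.
have -> : C * (q ^+ n - q ^+ (n + j).+1) / (1 - q)
    = C * q ^+ (n + j) + C * (q ^+ n - q ^+ (n + j)) / (1 - q).
  by rewrite exprS; field; rewrite gt_eqF.
exact: lerD.
Qed.

Lemma hcvg_geometric_steps u (q C : R) : 0 <= q -> q < 1 ->
  (forall n, nrm (u n.+1 - u n) <= C * q ^+ n) -> exists l, hcvg u l.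
Proof.
move=> q0 q1 du; have tail := hnorm_geometric_tail q0 q1 du.
have C0 : 0 <= C by have := du 0%N; rewrite expr0 mulr1; apply: le_trans; apply: hnorm_ge0.
have Cq : 0 < C / (1 - q) + 1.
  by rewrite ltr_pwDr // divr_ge0 // subr_ge0 ltW.
case: hilbV => _ _ _ _ /(_ u) []; last by move=> l ul; exists l.
move=> e e0.
have [N hN] := expr_eventually_lt q0 q1 (divr_gt0 e0 Cq).
exists N => m n.
wlog nm : m n / (n <= m)%N => [W Nm Nn|_ Nn].
  by case: (leqP n m) => [|/ltnW] h; [apply: W | rewrite hnormB_sym; apply: W].
apply: le_lt_trans (tail _ _ nm) _.
have := hN n Nn; rewrite ltr_pdivlMr // mulrC => h.
by apply: le_lt_trans h; rewrite ler_wpM2r ?exprn_ge0 // lerDl.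
Qed.

Lemma contraction_fixpoint (S : V -> Prop) (G : V -> V) (q : R) :
  closed_subspace ip S -> 0 <= q -> q < 1 -> (forall x, S x -> S (G x)) ->
  (forall a b, S a -> S b -> nrm (G a - G b) <= q * nrm (a - b)) ->
  exists2 l, S l & G l = l.
Proof.
move=> hS q0 q1 GS Gq; pose u n := iter n G 0.
have uS n : S (u n) by elim: n => [|n IH]; [exact: subspace0 | exact: GS].
have du n : nrm (u n.+1 - u n) <= nrm (u 1 - u 0) * q ^+ n.
  elim: n => [|n IH]; first by rewrite expr0 mulr1.
  rewrite exprS mulrCA; apply: le_trans (Gq _ _ (uS n.+1) (uS n)) _.
  exact: ler_wpM2l.
have [l ul] := hcvg_geometric_steps q0 q1 du.
have Sl := subspace_hcvg hS uS ul.
exists l => //; apply: hcvg_unique (hcvg_shift ul).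
exact: hcvg_lipschitz (fun n => Gq _ _ (uS n) Sl) ul.
Qed.

Section OperatorNorm.
Variable F : V -> V.
Hypothesis F_bounded : exists M, 0 <= M /\ forall x, nrm (F x) <= M * nrm x.

Lemma hnorm_le_opnorm x : nrm (F x) <= opnorm ip F * nrm x.
Proof.
have [x0|nx0] := eqVneq x 0.
  by case: F_bounded => M [_ /(_ x)]; rewrite x0 hnorm0 !mulr0.
have nx : 0 < nrm x := hnorm_gt0 nx0.
rewrite -ler_pdivrMr //; apply: lb_le_inf => [|M [_ hM]]; last by rewrite ler_pdivrMr.
by case: F_bounded => M hM; exists M.
Qed.

End OperatorNorm.

Section Projection.
Variables (S : V -> Prop) (P : V -> V).
Hypotheses (hS : closed_subspace ip S) (hP : is_orth_proj ip S P).

Lemma proj_subspace x : S (P x).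
Proof. by case: (hP x). Qed.

Lemma proj_orth x y : S y -> ip (x - P x) y = 0.
Proof. by case: (hP x) => _; apply. Qed.

Lemma re_ip_proj_orth x y : S y -> ⟨x - P x, y⟩ = 0.
Proof. by move=> Sy; rewrite /re_ip proj_orth. Qed.

Lemma proj_unique x u : S u -> (forall y, S y -> ip (x - u) y = 0) -> u = P x.
Proof.
move=> Su xu; apply/eqP; rewrite eq_sym -subr_eq0; apply/eqP/ip_eq0.
have Sw : S (P x - u) := subspaceB hS (proj_subspace x) Su.
rewrite {1}(_ : P x - u = (x - u) - (x - P x)); last first.
  by rewrite opprB [RHS]addrC addrA subrK.
by rewrite ipBl xu // proj_orth // subrr.
Qed.

Lemma proj_id x : S x -> P x = x.
Proof.
move=> Sx; apply/esym/proj_unique => // y _.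
by rewrite subrr -(scale0r 0) ipZl mul0r.
Qed.

Lemma proj_linear : linear_op P.
Proof.
move=> a x y; apply/esym/proj_unique.
  exact: (subspaceZD hS a (proj_subspace x) (proj_subspace y)).
move=> z Sz; rewrite opprD addrACA -scalerBr ipDl ipZl !proj_orth //.
by rewrite mulr0 addr0.
Qed.

Lemma re_ip_proj x y : S y -> ⟨P x, y⟩ = ⟨x, y⟩.
Proof.
move=> Sy; apply/eqP; rewrite -subr_eq0 -re_ipBl -opprB re_ipNl.
by rewrite re_ip_proj_orth // oppr0.
Qed.

Lemma re_ip_proj_orth_sym x y : ⟨x - P x, y⟩ = ⟨x - P x, y - P y⟩.
Proof. by rewrite re_ipBr (re_ip_proj_orth x (proj_subspace y)) subr0. Qed.

Lemma proj_pythagoras x : ⟨x, x⟩ = ⟨P x, P x⟩ + ⟨x - P x, x - P x⟩.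
Proof.
have := re_ip_sqrD (P x) (x - P x); rewrite addrC subrK => ->.
by rewrite (re_ipC (P x)) (re_ip_proj_orth _ (proj_subspace x)) mulr0 addr0.
Qed.

Lemma hnorm_proj_orth_le x : nrm (x - P x) <= nrm x.
Proof.
apply: (hnorm_le_sqr (hnorm_ge0 _)); rewrite hnorm_sqr (proj_pythagoras x) lerDr.
exact: re_ip_ge0.
Qed.

Lemma hnorm_proj_le x : nrm (P x) <= nrm x.
Proof.
apply: (hnorm_le_sqr (hnorm_ge0 _)); rewrite hnorm_sqr (proj_pythagoras x) lerDl.
exact: re_ip_ge0.
Qed.

End Projection.

Section Coercive.
Variables (S : V -> Prop) (T : V -> V) (K c : R).
Hypotheses (hS : closed_subspace ip S) (Tlin : linear_op T).
Hypothesis TS : forall x, S x -> S (T x).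
Hypothesis TK : forall x, S x -> nrm (T x) <= K * nrm x.
Hypothesis T_coercive : forall x, S x -> c * ⟨x, x⟩ <= ⟨T x, x⟩.
Hypothesis c_gt0 : 0 < c.

Lemma coercive_lb x : S x -> c * nrm x <= nrm (T x).
Proof.
move=> Sx; have [->|nx0] := eqVneq x 0; first by rewrite hnorm0 mulr0 hnorm_ge0.
rewrite -(ler_pM2r (hnorm_gt0 nx0)) -mulrA -expr2 hnorm_sqr.
exact: le_trans (T_coercive Sx) (re_ip_le _ _).
Qed.

Lemma coercive_inj x y : S x -> S y -> T x = T y -> x = y.
Proof.
move=> Sx Sy Txy; apply/eqP; rewrite -subr_eq0; apply/eqP/hnorm_eq0.
apply/le_anti; rewrite hnorm_ge0 andbT -(ler_pM2l c_gt0) mulr0.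
by have := coercive_lb (subspaceB hS Sx Sy); rewrite (linear_opB Tlin) Txy subrr hnorm0.
Qed.

(* With k = |K| + c, s = c / k and r = s / k:
   |w - r T w|^2 <= (1 - s^2) |w|^2 <= (1 - s^2 / 2)^2 |w|^2. *)
Lemma coercive_contraction : exists r q : R, [/\ 0 < r, 0 <= q, q < 1 &
  forall w, S w -> nrm (w - r%:C *: T w) <= q * nrm w].
Proof.
pose k : R := `|K| + c; pose s := c / k; pose r := s / k.
have k0 : 0 < k by rewrite ltr_wpDl.
have Tk x : S x -> nrm (T x) <= k * nrm x.
  move=> Sx; apply: le_trans (TK Sx) (ler_wpM2r (hnorm_ge0 _) _).
  exact: ler_wpDr (ltW c_gt0) (ler_norm K).
have s0 : 0 < s by rewrite divr_gt0.
have rc : r * c = s ^+ 2 by rewrite /r /s; field; rewrite gt_eqF.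
have rk : r * k = s by rewrite /r divfK ?gt_eqF.
have r0 : 0 < r by rewrite divr_gt0.
clearbody r.
have s1 : s <= 1 by rewrite ler_pdivrMr // mul1r lerDr.
have /andP[s2_gt0 s2_le1] : 0 < s ^+ 2 <= 1 by rewrite exprn_gt0 // expr_le1 // ltW.
exists r, (1 - s ^+ 2 / 2); split; [by [] | lra | lra |].
move=> w Sw; apply: hnorm_le_sqr; first by rewrite mulr_ge0 ?hnorm_ge0 //; lra.
rewrite re_ip_sqrB re_ipZr re_ip_sqrZ (re_ipC w) [(_ * nrm w) ^+ 2]exprMn hnorm_sqr.
have Tc := ler_wpM2l (ltW r0) (T_coercive Sw); rewrite mulrA rc in Tc.
have TT : r ^+ 2 * ⟨T w, T w⟩ <= s ^+ 2 * ⟨w, w⟩.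
  rewrite -rk exprMn -[leRHS]mulrA; apply: ler_wpM2l; first exact: sqr_ge0.
  rewrite -!hnorm_sqr -exprMn ler_sqr ?nnegrE ?mulr_ge0 ?hnorm_ge0 ?(ltW k0) //.
  exact: Tk.
have ww := re_ip_ge0 w.
have gap : (1 - s ^+ 2) * ⟨w, w⟩ <= (1 - s ^+ 2 / 2) ^+ 2 * ⟨w, w⟩.
  by rewrite ler_wpM2r //; nra.
lra.
Qed.

Lemma coercive_surj y : S y -> exists2 x, S x & T x = y.
Proof.
move=> Sy; have [r [q [r0 q0 q1 contr]]] := coercive_contraction.
pose G x := x + r%:C *: (y - T x).
have GS x : S x -> S (G x).
  by move=> Sx; apply: (subspaceD hS Sx (subspaceZ hS _ (subspaceB hS Sy (TS Sx)))).
have Gq a b : S a -> S b -> nrm (G a - G b) <= q * nrm (a - b).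
  have -> : G a - G b = (a - b) - r%:C *: T (a - b).
    rewrite /G opprD addrACA -scalerBr opprB [_ + (_ - y)]addrC subrKA.
    by rewrite (linear_opB Tlin) -scalerN opprB.
  by move=> Sa Sb; apply: contr; apply: subspaceB.
have [x Sx Gx] := contraction_fixpoint hS q0 q1 GS Gq; exists x => //.
move/eqP: Gx; rewrite /G addrC eq_sym -subr_eq subrr eq_sym scaler_eq0 fmorph_eq0.
by rewrite gt_eqF //= subr_eq0 => /eqP.
Qed.

(* spectrum_on asks for an inverse that is linear on all of V: it is taken to
   be T^-1 \o Pr for a linear retraction Pr onto S. *)
Lemma coercive_invertible (Pr : V -> V) : linear_op Pr ->
  (forall x, S (Pr x)) -> (forall x, S x -> Pr x = x) ->
  exists B : V -> V, [/\ forall x, S x -> S (B x), linear_op B, bounded_on ip S B,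
    forall x, S x -> B (T x) = x & forall x, S x -> T (B x) = x].
Proof.
move=> Prlin PrS PrId.
have /choice [B BP] y : exists x, S x /\ T x = Pr y.
  by have [x Sx Tx] := coercive_surj (PrS y); exists x.
have BS y : S (B y) by case: (BP y).
have TB y : T (B y) = Pr y by case: (BP y).
exists B; split => //.
- move=> a x y; apply: coercive_inj => //.
    exact: (subspaceZD hS a (BS x) (BS y)).
  by rewrite TB Prlin (linear_opD Tlin) (linear_opZ Tlin) !TB.
- exists c^-1 => y Sy; rewrite -(ler_pM2l c_gt0) mulrA mulfV ?gt_eqF // mul1r.
  by have := coercive_lb (BS y); rewrite TB PrId.
- move=> x Sx; apply: (coercive_inj (BS _) Sx).
  by rewrite TB PrId //; apply: TS.
- by move=> x Sx; rewrite TB PrId.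
Qed.

End Coercive.

Section NonnegOperator.
Variables (S : V -> Prop) (T : V -> V) (k : R).
Hypotheses (hS : closed_subspace ip S) (Tlin : linear_op T).
Hypothesis TS : forall x, S x -> S (T x).
Hypothesis Tk : forall x, S x -> nrm (T x) <= k * nrm x.
Hypothesis T_sa : forall x y, S x -> S y -> ⟨T x, y⟩ = ⟨x, T y⟩.
Hypothesis T_ge0 : forall x, S x -> 0 <= ⟨T x, x⟩.
Hypothesis k_gt0 : 0 < k.

(* Expand 0 <= <T (x - T x / k), x - T x / k>. *)
Lemma nonneg_op_sqr_le x : S x -> nrm (T x) ^+ 2 <= k * ⟨T x, x⟩.
Proof.
move=> Sx; set y := T x; have Sy : S y := TS Sx.
pose r := k^-1.
have r0 : 0 < r by rewrite invr_gt0.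
have rk : r * k = 1 by rewrite mulVf ?gt_eqF.
have := T_ge0 (subspaceB hS Sx (subspaceZ hS r%:C Sy)).
rewrite (linear_opB Tlin) (linear_opZ Tlin) re_ipBl !re_ipBr !re_ipZl !re_ipZr.
rewrite (T_sa Sy Sx) -/y hnorm_sqr.
have Tyy : ⟨T y, y⟩ <= k * ⟨y, y⟩.
  apply: le_trans (re_ip_le _ _) _; rewrite -hnorm_sqr expr2 mulrA.
  by apply: ler_wpM2r; [exact: hnorm_ge0 | exact: Tk].
have h1 := ler_wpM2l (ltW r0) Tyy; rewrite mulrA rk mul1r in h1.
have h2 := ler_wpM2l (ltW r0) h1.
move=> h0; have h3 : 0 <= ⟨y, x⟩ - r * ⟨y, y⟩ by lra.
have := ler_wpM2l (ltW k_gt0) h3.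
by rewrite mulr0 mulrBr mulrA (mulrC k r) rk mul1r subr_ge0.
Qed.

Lemma nonneg_op_inverse_lb (B : V -> V) (M : R) :
  (forall x, S x -> nrm (B x) <= M * nrm x) -> (forall x, S x -> B (T x) = x) ->
  forall x, S x -> ⟨x, x⟩ <= M ^+ 2 * k * ⟨T x, x⟩.
Proof.
move=> BM BT x Sx.
have x_le : nrm x <= M * nrm (T x) by rewrite -{1}(BT _ Sx); exact: BM (TS Sx).
have := nonneg_op_sqr_le Sx; have := hnorm_ge0 x; have := hnorm_ge0 (T x).
rewrite -hnorm_sqr; nra.
Qed.

End NonnegOperator.

Section SpectralBounds.
Variables (S : V -> Prop) (A : V -> V) (K : R).
Hypotheses (hS : closed_subspace ip S) (Alin : linear_op A).
Hypothesis AS : forall x, S x -> S (A x).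
Hypothesis AK : forall x, S x -> nrm (A x) <= K * nrm x.

Local Notation shift z := (fun x => A x - z%:C *: x).

Lemma shift_linear (z : R) : linear_op (shift z).
Proof.
move=> a x y; rewrite Alin scalerDr scalerA mulrC -scalerA.
by rewrite opprD addrACA -scalerBr.
Qed.

Lemma shift_subspace (z : R) x : S x -> S (shift z x).
Proof. by move=> Sx; apply: (subspaceB hS (AS Sx) (subspaceZ hS _ Sx)). Qed.

Lemma shift_bounded (z : R) x : S x -> nrm (shift z x) <= (K + `|z|) * nrm x.
Proof.
move=> Sx; apply: le_trans (ler_hnormB _ _) _.
by rewrite hnormZ mulrDl lerD2r AK.
Qed.

Lemma re_ip_shift (z : R) x y : ⟨shift z x, y⟩ = ⟨A x, y⟩ - z * ⟨x, y⟩.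
Proof. by rewrite re_ipBl re_ipZl. Qed.

Section LowerBound.
Variable Pr : V -> V.
Hypotheses (Prlin : linear_op Pr) (PrS : forall x, S (Pr x)).
Hypothesis PrId : forall x, S x -> Pr x = x.

Lemma spectrum_ge_form_lb (m z : R) :
  (forall x, S x -> m * ⟨x, x⟩ <= ⟨A x, x⟩) -> spectrum_on ip S A z%:C -> m <= z.
Proof.
move=> Am; rewrite leNgt; apply: contraPN => zm; apply.
have coer x : S x -> (m - z) * ⟨x, x⟩ <= ⟨shift z x, x⟩.
  by move=> Sx; rewrite re_ip_shift mulrBl lerD2r Am.
have mz : 0 < m - z by rewrite subr_gt0.
exact: (coercive_invertible hS (shift_linear z) (@shift_subspace z) (@shift_bounded z)
  coer mz Prlin PrS PrId).
Qed.

End LowerBound.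

Section UpperBound.
Hypothesis A_sa : forall x y, S x -> S y -> ⟨A x, y⟩ = ⟨x, A y⟩.

Definition numrange : set R := [set ⟨A x, x⟩ | x in [set x | S x /\ ⟨x, x⟩ = 1]].

Lemma numrange_lbound : has_lbound numrange.
Proof.
exists (- K) => _ [x [Sx x1] <-].
have nx : nrm x = 1 by rewrite /hnorm -/(re_ip x x) x1 sqrtr1.
apply: le_trans (re_ip_ge _ _); rewrite nx mulr1 lerN2.
by have := AK Sx; rewrite nx mulr1.
Qed.

Lemma numrange_ratio x : S x -> x != 0 -> numrange (⟨A x, x⟩ / ⟨x, x⟩).
Proof.
move=> Sx x0; have nx := hnorm_gt0 x0.
have xx : ⟨x, x⟩ = nrm x ^+ 2 by rewrite hnorm_sqr.
exists ((nrm x)^-1%:C *: x); first split.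
- exact: (subspaceZ hS _ Sx).
- by rewrite re_ip_sqrZ xx exprVn mulVf // expf_neq0 // gt_eqF.
- by rewrite (linear_opZ Alin) re_ipZl re_ipZr xx; field; rewrite gt_eqF.
Qed.

Lemma inf_numrange_form x : S x -> inf numrange * ⟨x, x⟩ <= ⟨A x, x⟩.
Proof.
move=> Sx; have [->|x0] := eqVneq x 0.
  by rewrite re_ip0l mulr0 (linear_op0 Alin) re_ip0l.
rewrite -ler_pdivlMr ?re_ip_gt0 //.
exact: ge_inf numrange_lbound _ (numrange_ratio Sx x0).
Qed.

(* Unit vectors x with <A x, x> close to m = inf numrange make
   <(A - m) x, x> small, which a bounded inverse of A - m forbids. *)
Lemma inf_numrange_spectrum x0 : S x0 -> x0 != 0 -> spectrum_on ip S A (inf numrange)%:C.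
Proof.
move=> Sx0 x00 [B [_ _ [M BM] BT _]].
set m := inf numrange; set k := `|K| + `|m| + 1.
have k0 : 0 < k by rewrite ltr_wpDl ?addr_ge0.
have Tk x : S x -> nrm (shift m x) <= k * nrm x.
  move=> Sx; apply: le_trans (shift_bounded m Sx) _; apply: ler_wpM2r; first exact: hnorm_ge0.
  by rewrite /k -addrA lerD ?ler_norm // lerDl.
have T_sa x y : S x -> S y -> ⟨shift m x, y⟩ = ⟨x, shift m y⟩.
  by move=> Sx Sy; rewrite re_ip_shift re_ipBr re_ipZr A_sa.
have T_ge0 x : S x -> 0 <= ⟨shift m x, x⟩.
  by move=> Sx; rewrite re_ip_shift subr_ge0 inf_numrange_form.
have inverse_lb :=
  nonneg_op_inverse_lb hS (shift_linear m) (@shift_subspace m) Tk T_sa T_ge0 k0 BM BT.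
have Mk0 : 0 <= M ^+ 2 * k by rewrite mulr_ge0 ?sqr_ge0 // ltW.
pose eps := (M ^+ 2 * k + 1)^-1.
have eps0 : 0 < eps by rewrite invr_gt0; lra.
have hinf : has_inf numrange.
  split; last exact: numrange_lbound.
  by exists (⟨A x0, x0⟩ / ⟨x0, x0⟩); apply: numrange_ratio.
have [_ [x [Sx x1] <-] near_inf] := inf_adherent eps0 hinf.
have Tx_small : ⟨shift m x, x⟩ < eps by rewrite re_ip_shift x1 mulr1 ltrBlDl.
have := inverse_lb _ Sx; rewrite x1.
have : M ^+ 2 * k * eps < 1 by rewrite ltr_pdivrMr ?mul1r ?ltrDl //; lra.
nra.
Qed.

Lemma form_ge_spectrum_lb (l : R) : (forall z, spectrum_on ip S A z -> l%:C <= z) ->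
  forall x, S x -> l * ⟨x, x⟩ <= ⟨A x, x⟩.
Proof.
move=> spec_ge x Sx; rewrite leNgt; apply/negP => Ax_lt.
have x0 : x != 0.
  by apply: contraTneq Ax_lt => ->; rewrite re_ip0l mulr0 (linear_op0 Alin) re_ip0l ltxx.
have := spec_ge _ (inf_numrange_spectrum Sx x0); rewrite lecR leNgt => /negP; apply.
apply: le_lt_trans (ge_inf numrange_lbound (numrange_ratio Sx x0)) _.
by rewrite ltr_pdivrMr ?re_ip_gt0.
Qed.

End UpperBound.

End SpectralBounds.

Section Penalty.
Variables (S : V -> Prop) (P H : V -> V) (K : R).
Hypotheses (hS : closed_subspace ip S) (hP : is_orth_proj ip S P).
Hypotheses (Hlin : linear_op H) (HK : forall x, nrm (H x) <= K * nrm x).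
Hypotheses (H_sa : selfadjoint ip H) (H_ge0 : nonneg_op ip H).

Local Notation PHP := (fun x => P (H x)).
Local Notation HI := (fun x => H x + x).

Definition penalized (t : R) (x : V) : V := H x + t%:C *: (x - P x).

Lemma re_ip_sa x y : ⟨H x, y⟩ = ⟨x, H y⟩.
Proof. by rewrite /re_ip H_sa. Qed.

Lemma re_ip_nonneg x : 0 <= ⟨H x, x⟩.
Proof. by have := H_ge0 x; rewrite lecE => /andP[]. Qed.

Lemma penalized_linear t : linear_op (penalized t).
Proof.
move=> a x y; rewrite /penalized Hlin (proj_linear hS hP) opprD addrACA -scalerBr.
by rewrite !scalerDr !scalerA [t%:C * a]mulrC addrACA.
Qed.

Lemma re_ip_penalized t x y : ⟨penalized t x, y⟩ = ⟨H x, y⟩ + t * ⟨x - P x, y - P y⟩.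
Proof. by rewrite /penalized re_ipDl re_ipZl (re_ip_proj_orth_sym hP). Qed.

Lemma penalized_sa t x y : ⟨penalized t x, y⟩ = ⟨x, penalized t y⟩.
Proof.
rewrite re_ip_penalized re_ip_sa /penalized [RHS]re_ipDr re_ipZr; congr (_ + t * _).
by rewrite [RHS]re_ipC (re_ip_proj_orth_sym hP y x) re_ipC.
Qed.

Lemma penalized_bounded t x : 0 <= t -> nrm (penalized t x) <= (K + t) * nrm x.
Proof.
move=> t0; apply: le_trans (ler_hnormD _ _) _.
rewrite hnormZ ger0_norm // mulrDl lerD // ler_wpM2l //.
exact: hnorm_proj_orth_le.
Qed.

Lemma compression_linear : linear_op PHP.
Proof. by move=> a x y; rewrite Hlin (proj_linear hS hP). Qed.

Lemma compression_subspace x : S x -> S (P (H x)).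
Proof. by move=> _; apply: proj_subspace hP _. Qed.

Lemma compression_bounded x : S x -> nrm (P (H x)) <= K * nrm x.
Proof. by move=> _; apply: le_trans (hnorm_proj_le hP _) (HK x). Qed.

Lemma compression_sa x y : S x -> S y -> ⟨P (H x), y⟩ = ⟨x, P (H y)⟩.
Proof.
move=> Sx Sy; rewrite (re_ip_proj hP) // re_ip_sa [RHS]re_ipC (re_ip_proj hP) //.
by rewrite re_ipC.
Qed.

Lemma compression_form (l : R) : is_spec_min ip S PHP l ->
  forall u, S u -> l * ⟨u, u⟩ <= ⟨H u, u⟩.
Proof.
move=> [_ l_min] u Su; rewrite -[⟨H u, u⟩](re_ip_proj hP) //.
exact: (form_ge_spectrum_lb hS compression_linear compression_subspace
  compression_bounded compression_sa l_min).
Qed.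

Lemma compression_spectrum_ge (l z : R) :
  (forall u, S u -> l * ⟨u, u⟩ <= ⟨H u, u⟩) -> spectrum_on ip S PHP z%:C -> l <= z.
Proof.
move=> Hl; apply: (spectrum_ge_form_lb hS compression_linear compression_subspace
  compression_bounded (proj_linear hS hP) (proj_subspace hP) (proj_id hS hP)).
by move=> x Sx; rewrite (re_ip_proj hP) // Hl.
Qed.

Lemma compression_min_ge0 (l : R) : is_spec_min ip S PHP l -> 0 <= l.
Proof.
by case=> l_spec _; apply: compression_spectrum_ge l_spec => u _; rewrite mul0r re_ip_nonneg.
Qed.

Lemma penalized_min_le (t lt l : R) : 0 <= t ->
  is_spec_min ip (fun _ => True) (penalized t) lt -> is_spec_min ip S PHP l -> lt <= l.
Proof.
move=> t0 [_ lt_min] [l_spec _]; apply: compression_spectrum_ge l_spec => u Su.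
have := form_ge_spectrum_lb closed_subspaceT (penalized_linear t) (fun _ _ => I)
  (fun x _ => penalized_bounded x t0) (fun x y _ _ => penalized_sa t x y) lt_min.
by move=> /(_ u I); rewrite re_ip_penalized (proj_id hS hP) // subrr re_ip0l mulr0 addr0.
Qed.

Lemma H_add_id_bounded : exists M, 0 <= M /\ forall x, nrm (H x + x) <= M * nrm x.
Proof.
exists (`|K| + 1); split; first by rewrite addr_ge0.
move=> x; apply: le_trans (ler_hnormD _ _) _; rewrite mulrDl mul1r lerD2r.
by apply: le_trans (HK x) _; apply: ler_wpM2r; [exact: hnorm_ge0 | exact: ler_norm].
Qed.

Lemma compression_min_le_opnorm (l : R) u : S u -> u != 0 ->
  is_spec_min ip S PHP l -> l + 1 <= opnorm ip HI.
Proof.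
move=> Su u0 l_min; rewrite -(ler_pM2r (re_ip_gt0 u0)).
apply: le_trans (_ : ⟨H u + u, u⟩ <= _).
  by rewrite re_ipDl mulrDl mul1r lerD2r (compression_form l_min).
apply: le_trans (re_ip_le _ _) _; rewrite -hnorm_sqr expr2 mulrA.
by apply: ler_wpM2r; [exact: hnorm_ge0 | exact: (hnorm_le_opnorm H_add_id_bounded)].
Qed.

Lemma re_ip_orth_sum u v : ⟨u, v⟩ = 0 ->
  ⟨H (u + v), u + v⟩ = ⟨H u, u⟩ + 2 * ⟨H u + u, v⟩ + ⟨H v, v⟩.
Proof.
move=> uv; rewrite (linear_opD Hlin) !re_ipDl !re_ipDr uv.
by rewrite (re_ip_sa v) (re_ipC v (H u)); ring.
Qed.

Lemma penalized_form_lb (t l : R) x : is_spec_min ip S PHP l ->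
  l * nrm (P x) ^+ 2 - 2 * opnorm ip HI * nrm (P x) * nrm (x - P x) + t * nrm (x - P x) ^+ 2
    <= ⟨penalized t x, x⟩.
Proof.
move=> l_min; have Su := proj_subspace hP x.
have uv : ⟨P x, x - P x⟩ = 0 by rewrite re_ipC (re_ip_proj_orth hP).
have := re_ip_orth_sum uv; rewrite subrKC re_ip_penalized -!hnorm_sqr => ->.
have Huv : - (opnorm ip HI * nrm (P x) * nrm (x - P x)) <= ⟨H (P x) + P x, x - P x⟩.
  apply: le_trans (re_ip_ge _ _); rewrite lerN2 -mulrA [leRHS]mulrC mulrC mulrA.
  by apply: ler_wpM2r; [exact: hnorm_ge0 | exact: (hnorm_le_opnorm H_add_id_bounded)].
have := compression_form l_min Su; have := re_ip_nonneg (x - P x).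
rewrite -hnorm_sqr; lra.
Qed.

Lemma penalized_min_ge (t lt l : R) u : S u -> u != 0 -> 2 * opnorm ip HI ^+ 2 <= t ->
  is_spec_min ip (fun _ => True) (penalized t) lt -> is_spec_min ip S PHP l ->
  l - 4 * opnorm ip HI ^+ 2 * (l + 1) ^+ 2 / (t + 1) <= lt.
Proof.
move=> Su u0 tn [lt_spec _] l_min.
have t0 : 0 <= t by apply: le_trans tn; rewrite mulr_ge0 ?sqr_ge0.
apply: (spectrum_ge_form_lb closed_subspaceT (penalized_linear t) (fun _ _ => I)
  (fun x _ => penalized_bounded x t0) (Pr := id)) lt_spec => // x _.
apply: le_trans (penalized_form_lb t x l_min).
rewrite (proj_pythagoras hP x) -!hnorm_sqr.
apply: penalty_quadratic_lb tn; first exact: compression_min_ge0 l_min.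
exact: compression_min_le_opnorm Su u0 l_min.
Qed.

End Penalty.

End Hilbert.

End HilbertSpace.

Theorem corollary4p4 (R : realType) (V : lmodType R[i]) (ip : V -> V -> R[i])
    (S : V -> Prop) (P H : V -> V) (lam : R -> R) (laminf : R) :
  is_hilbert ip ->
  closed_subspace ip S ->
  (exists2 x : V, S x & x <> 0) ->
  (exists x : V, ~ S x) ->
  is_orth_proj ip S P ->
  linear_op H -> bounded_on ip (fun _ => True) H ->
  selfadjoint ip H -> nonneg_op ip H ->
  (* lam t = min sigma(H_t),  H_t = H + t Q^* Q,  Q^* Q x = x - P x *)
  (forall t : R, 0 <= t ->
     is_spec_min ip (fun _ => True) (fun x => H x + t%:C *: (x - P x)) (lam t)) ->
  (* laminf = min sigma[P H P^*], as an operator on S *)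
  is_spec_min ip S (fun x => P (H x)) laminf ->
  (forall t : R, 0 <= t -> lam t <= laminf) /\
  (forall t : R, 2 * opnorm ip (fun x => H x + x) ^+ 2 <= t ->
     laminf - 4 * opnorm ip (fun x => H x + x) ^+ 2 * (laminf + 1) ^+ 2 / (t + 1)
       <= lam t /\
     laminf - 4 * opnorm ip (fun x => H x + x) ^+ 4 / (t + 1)
       <= laminf - 4 * opnorm ip (fun x => H x + x) ^+ 2 * (laminf + 1) ^+ 2 / (t + 1)).
Proof.
move=> hilbV hS [u Su /eqP u0] _ hP Hlin [K HK] H_sa H_ge0 lam_min laminf_min.
have {}HK x : hnorm ip (H x) <= K * hnorm ip x := HK x I.
split=> [t t0 | t tn].
  exact: (penalized_min_le hilbV hS hP Hlin HK H_sa t0 (lam_min t t0) laminf_min).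
have t0 : 0 <= t by apply: le_trans tn; rewrite mulr_ge0 ?sqr_ge0.
split.
  exact: (penalized_min_ge hilbV hS hP Hlin HK H_sa H_ge0 Su u0 tn (lam_min t t0) laminf_min).
have l0 := compression_min_ge0 hilbV hS hP Hlin HK H_ge0 laminf_min.
have Ln := compression_min_le_opnorm hilbV hS hP Hlin HK H_sa Su u0 laminf_min.
exact: penalty_bound_le l0 Ln t0.
Qed.
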